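(* Let $E$ be an Archimedean vector lattice with a weak unit $u$, let $X$ be a compact Hausdorff space and let $T:E\to S(X)$ be an injective lattice homomorphism such that $T(u)=\mathbf{1}_X$ and the closure, with respect to the supremum norm, of $T(E_u)$ equals $C(X)$, where $E_u$ is the ideal of $E$ generated by $u$ (such $X$ and $T$ exist by Wickstead's representation theorem, and $T$ is this representation). Then $T$ is order continuous and $uo$-continuous (i.e. $x_\alpha\xrightarrow{uo}x$ in $E$ implies $T(x_\alpha)\xrightarrow{uo}T(x)$ in $S(X)$). Moreover $T^{-1}:T(E)\to E$ is $uo$-continuous: if $T(x_\alpha)\xrightarrow{uo}T(x)$ in $S(X)$ then $x_\alpha\xrightarrow{uo}x$ in $E$.
   Context: For a topological space $X$, $S(X)$ is the Archimedean vector lattice of equivalence classes of continuous real-valued functions defined on open dense subsets of $X$ (two functions identified if they agree on the intersection of their domains), with pointwise operations; $C(X)$ is viewed inside $S(X)$ and $\mathbf{1}_X$ is the constant function $1$. A net $(x_\alpha)$ in a vector lattice $E$ converges in order to $x$ if there is a net $u_\gamma\downarrow 0$ such that for each $\gamma$ there is $\alpha_0$ with $|x_\alpha-x|\le u_\gamma$ for $\alpha\ge\alpha_0$; it is $uo$-convergent to $x$ if $|x_\alpha-x|\wedge w$ converges in order to $0$ for every $w\in E_+$. An operator is order continuous if it maps order null nets to order null nets. *)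

From HB Require Import structures.
From mathcomp Require Import all_boot all_order all_algebra.
From mathcomp Require Import all_classical all_reals all_analysis.
Set Implicit Arguments. Unset Strict Implicit. Unset Printing Implicit Defensive.
Import Order.TTheory GRing.Theory Num.Theory.
Import numFieldNormedType.Exports.
Local Open Scope classical_set_scope.
Local Open Scope ring_scope.

Record VectorLattice (R : realType) := {
  vl_car :> lmodType R;
  vl_le : vl_car -> vl_car -> Prop;
  vl_sup : vl_car -> vl_car -> vl_car;
  vl_inf : vl_car -> vl_car -> vl_car;
  vl_le_refl : forall x, vl_le x x;
  vl_le_trans : forall x y z, vl_le x y -> vl_le y z -> vl_le x z;
  vl_le_anti : forall x y, vl_le x y -> vl_le y x -> x = y;
  vl_le_add : forall x y z, vl_le x y -> vl_le (x + z) (y + z);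
  vl_le_scale : forall (a : R) x y, 0 <= a -> vl_le x y -> vl_le (a *: x) (a *: y);
  vl_sup_ub_l : forall x y, vl_le x (vl_sup x y);
  vl_sup_ub_r : forall x y, vl_le y (vl_sup x y);
  vl_sup_least : forall x y z, vl_le x z -> vl_le y z -> vl_le (vl_sup x y) z;
  vl_inf_lb_l : forall x y, vl_le (vl_inf x y) x;
  vl_inf_lb_r : forall x y, vl_le (vl_inf x y) y;
  vl_inf_greatest : forall x y z, vl_le z x -> vl_le z y -> vl_le z (vl_inf x y)
}.

Section VLdefs.
Variables (R : realType) (E : VectorLattice R).

Definition vl_abs (x : E) : E := vl_sup x (- x).

Definition archimedean_vl : Prop :=
  forall x y : E, vl_le 0 x -> (forall n : nat, vl_le (n%:R *: x) y) -> x = 0.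

Definition weak_unit (u : E) : Prop :=
  vl_le 0 u /\ forall x : E, vl_inf (vl_abs x) u = 0 -> x = 0.

Definition ideal_gen (u : E) : set E :=
  [set x | exists lam : R, vl_le (vl_abs x) (lam *: u)].
End VLdefs.

Definition directed (A : Type) (leA : A -> A -> Prop) : Prop :=
  [/\ inhabited A, (forall a, leA a a),
      (forall a b c, leA a b -> leA b c -> leA a c) &
      (forall a b, exists c, leA a c /\ leA b c)].

Record OSig := {
  os_car :> Type;
  os_le : os_car -> os_car -> Prop;
  os_zero : os_car;
  os_sub : os_car -> os_car -> os_car;
  os_abs : os_car -> os_car;
  os_meet : os_car -> os_car -> os_car
}.

Section Conv.
Variable S : OSig.

Definition decr_to_zero (G : Type) (leG : G -> G -> Prop) (u : G -> S) : Prop :=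
  [/\ directed leG,
      (forall g g', leG g g' -> os_le (u g') (u g)),
      (forall g, os_le (os_zero S) (u g)) &
      (forall w : S, (forall g, os_le w (u g)) -> os_le w (os_zero S))].

Definition ocvg (A : Type) (leA : A -> A -> Prop) (x : A -> S) (l : S) : Prop :=
  exists (G : Type) (leG : G -> G -> Prop) (u : G -> S),
    decr_to_zero leG u /\
    forall g, exists a0, forall a, leA a0 a -> os_le (os_abs (os_sub (x a) l)) (u g).

Definition uocvg (A : Type) (leA : A -> A -> Prop) (x : A -> S) (l : S) : Prop :=
  forall w : S, os_le (os_zero S) w ->
    ocvg leA (fun a => os_meet (os_abs (os_sub (x a) l)) w) (os_zero S).
End Conv.

Definition VL_OSig (R : realType) (E : VectorLattice R) : OSig :=
  {| os_car := E; os_le := @vl_le R E; os_zero := 0;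
     os_sub := fun x y => x - y; os_abs := @vl_abs R E; os_meet := @vl_inf R E |}.

(* is a representative (domain, function); two representatives denote the  *)
(* same element of S(X) iff they agree on the intersection of the domains   *)
(* (sx_eq).  All notions below respect this identification.                 *)
(* Since the domain is open, continuity of the restriction to the domain is *)
(* the same as continuity at every point of the domain.                     *)
Record SX (R : realType) (X : topologicalType) := {
  sdom : set X;
  sfun : X -> R;
  sdom_open : open sdom;
  sdom_dense : dense sdom;
  sfun_cont : forall t, sdom t -> {for t, continuous sfun}
}.

Section SXops.
Variables (R : realType) (X : topologicalType).

Lemma denseT : dense (@setT X).
Proof. by move=> O [t Ot] _; exists t. Qed.

Lemma sx_dom2_open (f g : SX R X) : open (sdom f `&` sdom g).
Proof. exact: openI (sdom_open f) (sdom_open g). Qed.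

Lemma sx_dom2_dense (f g : SX R X) : dense (sdom f `&` sdom g).
Proof. exact: denseI (sdom_open f) (sdom_dense f) (sdom_dense g). Qed.

Definition sx_cst (c : R) : SX R X.
Proof.
refine {| sdom := setT; sfun := fun _ => c; sdom_open := openT;
          sdom_dense := denseT |}.
by move=> t _; exact: cvg_cst.
Defined.

Definition sx_of_cont (h : X -> R) (hc : continuous h) : SX R X.
Proof.
refine {| sdom := setT; sfun := h; sdom_open := openT; sdom_dense := denseT |}.
by move=> t _; exact: hc.
Defined.

Definition sx_lift2 (op : R -> R -> R)
  (opc : forall (f g : X -> R) t, {for t, continuous f} -> {for t, continuous g} ->
           {for t, continuous (fun s => op (f s) (g s))})
  (f g : SX R X) : SX R X.
Proof.
refine {| sdom := sdom f `&` sdom g; sfun := fun s => op (sfun f s) (sfun g s);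
          sdom_open := sx_dom2_open f g; sdom_dense := sx_dom2_dense f g |}.
by move=> t [tf tg]; apply: opc; [exact: sfun_cont tf | exact: sfun_cont tg].
Defined.

Lemma add_cont (f g : X -> R) t : {for t, continuous f} -> {for t, continuous g} ->
  {for t, continuous (fun s => f s + g s)}.
Proof. by move=> cf cg; apply: cvgD. Qed.

Lemma sub_cont (f g : X -> R) t : {for t, continuous f} -> {for t, continuous g} ->
  {for t, continuous (fun s => f s - g s)}.
Proof. by move=> cf cg; apply: cvgB. Qed.

Lemma max_cont (f g : X -> R) t : {for t, continuous f} -> {for t, continuous g} ->
  {for t, continuous (fun s => Num.max (f s) (g s))}.
Proof. by move=> cf cg; exact: (@continuous_max R X f g t cf cg). Qed.

Lemma min_cont (f g : X -> R) t : {for t, continuous f} -> {for t, continuous g} ->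
  {for t, continuous (fun s => Num.min (f s) (g s))}.
Proof. by move=> cf cg; exact: (@continuous_min R X f g t cf cg). Qed.

Definition sx_add := @sx_lift2 (fun a b => a + b) add_cont.
Definition sx_sub := @sx_lift2 (fun a b => a - b) sub_cont.
Definition sx_join := @sx_lift2 (fun a b => Num.max a b) max_cont.
Definition sx_meet := @sx_lift2 (fun a b => Num.min a b) min_cont.

Definition sx_scale (a : R) (f : SX R X) : SX R X.
Proof.
refine {| sdom := sdom f; sfun := fun s => a * sfun f s;
          sdom_open := sdom_open f; sdom_dense := sdom_dense f |}.
by move=> t tf; apply: cvgM; [exact: cvg_cst | exact: sfun_cont tf].
Defined.

Definition sx_abs (f : SX R X) : SX R X.
Proof.
refine {| sdom := sdom f; sfun := fun s => `|sfun f s|;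
          sdom_open := sdom_open f; sdom_dense := sdom_dense f |}.
by move=> t tf; apply: cvg_norm; exact: sfun_cont tf.
Defined.

Definition sx_le (f g : SX R X) : Prop :=
  forall t, sdom f t -> sdom g t -> sfun f t <= sfun g t.

Definition sx_eq (f g : SX R X) : Prop :=
  forall t, sdom f t -> sdom g t -> sfun f t = sfun g t.

Definition in_CX (f : SX R X) : Prop :=
  exists (h : X -> R) (hc : continuous h), sx_eq f (sx_of_cont hc).

Definition in_sup_closure (A : set (SX R X)) (f : SX R X) : Prop :=
  forall eps : R, 0 < eps ->
    exists g, A g /\ sx_le (sx_abs (sx_sub f g)) (sx_cst eps).
End SXops.

Definition SX_OSig (R : realType) (X : topologicalType) : OSig :=
  {| os_car := SX R X; os_le := @sx_le R X; os_zero := sx_cst X 0;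
     os_sub := @sx_sub R X; os_abs := @sx_abs R X; os_meet := @sx_meet R X |}.

Definition lattice_hom (R : realType) (E : VectorLattice R) (X : topologicalType)
  (T : E -> SX R X) : Prop :=
  [/\ forall x y : E, sx_eq (T (x + y)) (sx_add (T x) (T y)),
      forall (a : R) (x : E), sx_eq (T (a *: x)) (sx_scale a (T x)) &
      forall x y : E, sx_eq (T (vl_sup x y)) (sx_join (T x) (T y))].

Definition sx_injective (R : realType) (E : VectorLattice R) (X : topologicalType)
  (T : E -> SX R X) : Prop :=
  forall x y : E, sx_eq (T x) (T y) -> x = y.

(* Three facts drive the proof.  The injective lattice homomorphism T
   reflects the order, so inequalities in E may be checked pointwise, on a
   dense open set, after applying T.  By Urysohn's lemma and the density of
   T(E) in C(X), below every w in S(X) that is positive at some point lies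
   some T v with 0 < v.  Hence w <= T z_g for a net z_g decreasing to 0
   forces w <= 0: T preserves nets decreasing to 0, which gives order
   continuity, and, testing against u (T u = 1) with the bound
   |a| /\ W <= c (|a| /\ 1) + (W - c)^+, uo-continuity.  Conversely the
   eventual upper bounds of |x_a - l| /\ e form a dominating net; were q below
   all of them with T q^+ not below some d_h of the net witnessing
   T x_a -> T l, a positive v below (T q^+ - d_h)^+ could be subtracted from
   every such bound, so q <= e - n v for all n, against the Archimedean
   property. *)

From HB Require Import structures.
From mathcomp Require Import all_boot all_order all_algebra.
From mathcomp Require Import all_classical all_reals all_analysis.
From mathcomp Require Import lra.
Set Implicit Arguments. Unset Strict Implicit. Unset Printing Implicit Defensive.
Import Order.TTheory GRing.Theory Num.Theory.
Import numFieldNormedType.Exports.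
Local Open Scope classical_set_scope.
Local Open Scope ring_scope.

Section SXorder.
Variables (R : realType) (X : topologicalType).
Implicit Types (f g h : SX R X) (D : set X).

Lemma dense_open_meet D (N : set X) (t : X) : open D -> dense D -> nbhs t N ->
  exists s, D s /\ N s.
Proof.
move=> oD dD; rewrite nbhsE => -[B [oB Bt] BN].
have [|s [Bs Ds]] := dD B _ oB; first by exists t.
by exists s; split => //; apply: BN.
Qed.

Lemma le_at_of_dense (phi psi : X -> R) D (N : set X) (t : X) :
  {for t, continuous phi} -> {for t, continuous psi} ->
  open D -> dense D -> nbhs t N ->
  (forall s, D s -> N s -> phi s <= psi s) -> phi t <= psi t.
Proof.
move=> cphi cpsi oD dD Nt le_on; rewrite -subr_ge0 leNgt; apply/negP => neg.
have : \forall s \near t, psi s - phi s < 0 by apply: cvgr_lt neg; apply: cvgB.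
move=> /(filterI Nt) /(dense_open_meet oD dD) [s [Ds [Ns]]].
by rewrite subr_lt0 ltNge le_on.
Qed.

Lemma sx_le_dense D f g : open D -> dense D ->
  (forall t, D t -> sdom f t -> sdom g t -> sfun f t <= sfun g t) -> sx_le f g.
Proof.
move=> oD dD le_on t ft gt.
apply: (le_at_of_dense (sfun_cont ft) (sfun_cont gt) oD dD
  (open_nbhs_nbhs (conj (sx_dom2_open f g) (conj ft gt)))).
by move=> s Ds [fs gs]; apply: le_on.
Qed.

Lemma sx_le_anti f g : sx_le f g -> sx_le g f -> sx_eq f g.
Proof. by move=> fg gf t ft gt; apply/le_anti; rewrite fg ?gf. Qed.

Lemma sx_eq_le f g : sx_eq f g -> sx_le f g.
Proof. by move=> fg t ft gt; rewrite fg. Qed.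

Lemma sx_eq_sym f g : sx_eq f g -> sx_eq g f.
Proof. by move=> fg t gt ft; rewrite fg. Qed.

Lemma sx_le_refl f : sx_le f f.
Proof. by move=> t _ _. Qed.

Lemma sx_le_trans f g h : sx_le f g -> sx_le g h -> sx_le f h.
Proof.
move=> fg gh; apply: (sx_le_dense (sdom_open g) (sdom_dense g)) => t gt ft ht.
exact: le_trans (fg t ft gt) (gh t gt ht).
Qed.

Lemma sx_eq_trans f g h : sx_eq f g -> sx_eq g h -> sx_eq f h.
Proof.
move=> fg gh; apply: sx_le_anti.
  exact: sx_le_trans (sx_eq_le fg) (sx_eq_le gh).
exact: sx_le_trans (sx_eq_le (sx_eq_sym gh)) (sx_eq_le (sx_eq_sym fg)).
Qed.

Fixpoint sdoms (fs : seq (SX R X)) : set X :=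
  if fs is f :: fs' then sdom f `&` sdoms fs' else setT.

Lemma sdoms_open fs : open (sdoms fs).
Proof.
elim: fs => [|f fs IH] /=; first exact: openT.
exact: openI (sdom_open f) IH.
Qed.

Lemma sdoms_dense fs : dense (sdoms fs).
Proof.
elim: fs => [|f fs IH] /=; first exact: denseT.
exact: denseI (sdom_open f) (sdom_dense f) IH.
Qed.

Lemma sx_le_sdoms fs f g :
  (forall t, sdoms fs t -> sdom f t -> sdom g t -> sfun f t <= sfun g t) ->
  sx_le f g.
Proof. exact: sx_le_dense (sdoms_open fs) (sdoms_dense fs). Qed.

Lemma sx_eq_sdoms fs f g :
  (forall t, sdoms fs t -> sdom f t -> sdom g t -> sfun f t = sfun g t) ->
  sx_eq f g.
Proof.
by move=> eq_on; apply: sx_le_anti; apply: (sx_le_sdoms (fs := fs)) => t *;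
  rewrite eq_on.
Qed.

Lemma sx_pos_point fs f : ~ sx_le f (sx_cst X 0) ->
  exists t, [/\ sdoms fs t, sdom f t & 0 < sfun f t].
Proof.
move=> nle; apply: contrapT => nex; apply/nle/(sx_le_sdoms (fs := fs)).
move=> t Dt ft _ /=; rewrite leNgt; apply/negP => pos; apply: nex; exists t.
by split.
Qed.

Lemma open_sdom_gt f (c : R) : open [set t | sdom f t /\ c < sfun f t].
Proof.
rewrite openE => t [ft cft]; apply: filterI.
  exact: open_nbhs_nbhs (conj (sdom_open f) ft).
exact: cvgr_gt (sfun_cont ft) _ cft.
Qed.

Lemma sx_join_le f g h : sx_le f h -> sx_le g h -> sx_le (sx_join f g) h.
Proof. by move=> fh gh t [ft gt] ht /=; rewrite ge_max fh ?gh. Qed.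

Lemma sx_le_meet f g h : sx_le f g -> sx_le f h -> sx_le f (sx_meet g h).
Proof. by move=> fg fh t ft [gt ht] /=; rewrite le_min fg ?fh. Qed.

Lemma sx_meet_le_l f g : sx_le (sx_meet f g) f.
Proof. by move=> t [ft gt] _ /=; rewrite ge_min lexx. Qed.

Lemma sx_meet_le_r f g : sx_le (sx_meet f g) g.
Proof. by move=> t [ft gt] _ /=; rewrite ge_min lexx orbT. Qed.

End SXorder.

Lemma vl_sup_r (R : realType) (E : VectorLattice R) (x y : E) :
  vl_le x y -> vl_sup x y = y.
Proof.
move=> xy; apply: vl_le_anti; last exact: vl_sup_ub_r.
exact: vl_sup_least xy (vl_le_refl y).
Qed.

Lemma vl_subr_ge0 (R : realType) (E : VectorLattice R) (x y : E) :
  vl_le x y -> vl_le 0 (y - x).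
Proof. by move=> /(vl_le_add (- x)); rewrite subrr. Qed.

Lemma vl_le_subr_swap (R : realType) (E : VectorLattice R) (x y z : E) :
  vl_le x (y - z) -> vl_le z (y - x).
Proof.
move=> /(vl_le_add (z - x)); rewrite addrC subrK.
by rewrite addrA subrK.
Qed.

Section LatticeHom.
Variables (R : realType) (E : VectorLattice R) (X : topologicalType).
Variable T : E -> SX R X.
Hypothesis T_hom : lattice_hom T.
Implicit Types x y : E.

Lemma T_add x y : sx_eq (T (x + y)) (sx_add (T x) (T y)).
Proof. by case: T_hom. Qed.

Lemma T_scale (a : R) x : sx_eq (T (a *: x)) (sx_scale a (T x)).
Proof. by case: T_hom. Qed.

Lemma T_sup x y : sx_eq (T (vl_sup x y)) (sx_join (T x) (T y)).
Proof. by case: T_hom. Qed.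

Lemma T0 : sx_eq (T 0) (sx_cst X 0).
Proof.
have := T_scale (a := 0) (x := 0); rewrite scale0r => T00 t d0 _.
by rewrite (T00 t d0 d0) /= mul0r.
Qed.

Lemma T_opp x : sx_eq (T (- x)) (sx_scale (-1) (T x)).
Proof. by rewrite -scaleN1r; exact: T_scale. Qed.

Lemma T_sub x y : sx_eq (T (x - y)) (sx_sub (T x) (T y)).
Proof.
apply: (sx_eq_sdoms (fs := [:: T (- y)])) => t [dNy _] dxy [dx dy] /=.
by rewrite (T_add dxy (conj dx dNy)) /= (T_opp dNy dy) /= mulN1r.
Qed.

Lemma T_abs x : sx_eq (T (vl_abs x)) (sx_abs (T x)).
Proof.
apply: (sx_eq_sdoms (fs := [:: T (- x)])) => t [dNx _] dax dx /=.
by rewrite (T_sup dax (conj dx dNx)) /= (T_opp dNx dx) /= mulN1r maxrN.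
Qed.

Lemma T_le x y : vl_le x y -> sx_le (T x) (T y).
Proof.
move=> xy t dx dy; have := T_sup (x := x) (y := y); rewrite vl_sup_r // => Tsup.
by rewrite (Tsup t dy (conj dx dy)) /= le_max lexx.
Qed.

Lemma T_ge0 x : vl_le 0 x -> sx_le (sx_cst X 0) (T x).
Proof. by move=> x0; exact: sx_le_trans (sx_eq_le (sx_eq_sym T0)) (T_le x0). Qed.

Hypothesis T_inj : sx_injective T.

Lemma le_of_T_le x y : sx_le (T x) (T y) -> vl_le x y.
Proof.
move=> Txy; suff <- : vl_sup x y = y by exact: vl_sup_ub_l.
apply: T_inj; apply: sx_eq_trans (T_sup (x := x) (y := y)) _.
by move=> t [dx dy] _ /=; rewrite max_r // Txy.
Qed.

Lemma T_inf x y : sx_eq (T (vl_inf x y)) (sx_meet (T x) (T y)).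
Proof.
(* m is mapped to the pointwise minimum and compared with x /\ y through T. *)
set m := x + y - vl_sup x y.
have Tm : sx_eq (T m) (sx_meet (T x) (T y)).
  apply: (sx_eq_sdoms (fs := [:: T (x + y); T (vl_sup x y)])).
  move=> t [dxy [dsup _]] dm [dx dy] /=.
  rewrite (T_sub dm (conj dxy dsup)) /= (T_add dxy (conj dx dy)).
  by rewrite (T_sup dsup (conj dx dy)) /= -(addr_min_max (sfun (T x) t)) addrK.
have m_le : vl_le m (vl_inf x y).
  apply: vl_inf_greatest; apply: le_of_T_le; apply: sx_le_trans (sx_eq_le Tm) _.
    exact: sx_meet_le_l.
  exact: sx_meet_le_r.
apply: sx_le_anti; first by apply: sx_le_meet; apply: T_le;
  [exact: vl_inf_lb_l | exact: vl_inf_lb_r].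
exact: sx_le_trans (sx_eq_le (sx_eq_sym Tm)) (T_le m_le).
Qed.

Lemma T_trunc_dist x l e :
  sx_eq (T (vl_abs (vl_inf (vl_abs (x - l)) e - 0)))
    (sx_abs (sx_sub (sx_meet (sx_abs (sx_sub (T x) (T l))) (T e)) (sx_cst X 0))).
Proof.
rewrite subr0; set y := vl_inf _ e.
apply: (sx_eq_sdoms (fs := [:: T y; T (vl_abs (x - l)); T (x - l)])).
move=> t [dy [da [dxl _]]] day [[[dx dl] de] _] /=.
rewrite (T_abs day dy) /= (T_inf dy (conj da de)) /= (T_abs da dxl) /=.
by rewrite (T_sub dxl (conj dx dl)) /= subr0.
Qed.

End LatticeHom.

Lemma creg_point_separator (R : realType) (X : topologicalType) (U : set X)
    (t0 : X) : completely_regular_space X -> open U -> U t0 ->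
  exists f : X -> R, [/\ continuous f, forall t, 0 <= f t, f t0 = 0 &
                         forall t, ~ U t -> f t = 1].
Proof.
move=> X_creg oU Ut0.
have [|f [cf f01 f_t0 f_U]] := (@uniform_separatorP X R [set t0] (~` U)).1.
  by apply: X_creg; [exact: open_closedC | apply].
exists f; split=> // [t||t nUt]; last by apply: f_U; exists t.
  by have /andP[] := f01 _ (imageT f t).
by apply: f_t0; exists t0.
Qed.

Section Density.
Variables (R : realType) (E : VectorLattice R) (X : topologicalType).
Variable T : E -> SX R X.
Hypothesis T_hom : lattice_hom T.
Hypothesis X_creg : completely_regular_space X.
Hypothesis T_dense : forall f : SX R X, in_CX f -> in_sup_closure (range T) f.

Lemma exists_T_le_pos_part (w : SX R X) t0 : sdom w t0 -> 0 < sfun w t0 ->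
  exists v : E, [/\ vl_le 0 v, v <> 0 & sx_le (T v) (sx_join w (sx_cst X 0))].
Proof.
(* h is c/4 at t0 and -c/4 off U; the positive part of an approximant T e
   of h within c/8 stays below w and is positive near t0. *)
move=> wt0; set c := sfun w t0 => c0.
pose U := [set s | sdom w s /\ c / 2 < sfun w s].
have Ut0 : U t0 by split=> //; rewrite -/c; lra.
have [f [cf f0 f_t0 f_U]] := creg_point_separator R X_creg (open_sdom_gt w _) Ut0.
pose h s := c / 4 - c / 2 * f s.
have hc : continuous h.
  move=> s; apply: cvgB; first exact: cvg_cst.
  by apply: cvgM; [exact: cvg_cst | exact: cf].
have hCX : in_CX (sx_of_cont hc) by exists h, hc.
have c8 : 0 < c / 8 by lra.
have [g [[e _ <-] close]] := T_dense hCX c8.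
have e_near s : sdom (T e) s -> `|h s - sfun (T e) s| <= c / 8.
  by move=> de; exact: close s (conj I de) I.
exists (vl_sup e 0); split; first exact: vl_sup_ub_r.
- move=> e0.
  have e_le0 : sx_le (T e) (sx_cst X 0).
    apply: sx_le_trans (T_le T_hom (vl_sup_ub_l e 0)) _.
    by rewrite e0; exact: sx_eq_le (T0 T_hom).
  have : \forall s \near t0, c / 8 < h s.
    apply: cvgr_gt; first exact: hc.
    by rewrite /h f_t0 mulr0 subr0; lra.
  move=> /(dense_open_meet (sdom_open (T e)) (sdom_dense _)) [s [de hs]].
  have := e_near s de; have := e_le0 s de I; rewrite /= ler_norml; lra.
have T_pos_part : sx_eq (T (vl_sup e 0)) (sx_join (T e) (sx_cst X 0)).
  apply: (sx_eq_sdoms (fs := [:: T 0])) => t [d0 _] dv [de _] /=.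
  by rewrite (T_sup T_hom dv (conj de d0)) /= (T0 T_hom d0 I).
apply: sx_le_trans (sx_eq_le T_pos_part) _; apply: sx_join_le; last first.
  by move=> t _ [_ _] /=; rewrite le_max lexx orbT.
move=> t de [dw _] /=; have := e_near t de; rewrite /h ler_norml le_max.
have [[_ cw]|nUt] := pselect (U t).
  have : 0 <= c / 2 * f t by rewrite mulr_ge0 //; lra.
  by move=> ? /andP[? _]; apply/orP; left; lra.
by rewrite f_U // mulr1 => /andP[? _]; apply/orP; right; lra.
Qed.

Hypothesis T_inj : sx_injective T.

Lemma le0_of_le_T_decr (G : Type) (leG : G -> G -> Prop) (z : G -> E)
    (w : SX R X) : decr_to_zero (S := VL_OSig E) leG z ->
  (forall g, sx_le w (T (z g))) -> sx_le w (sx_cst X 0).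
Proof.
case=> _ _ z0 z_inf w_le; apply: contrapT => /(sx_pos_point [::]).
move=> [t [_ wt wt0]]; have [v [v0 v_neq0 Tv_le]] := exists_T_le_pos_part wt wt0.
apply/v_neq0/vl_le_anti/v0/z_inf => g /=; apply: (le_of_T_le T_hom T_inj).
apply: sx_le_trans Tv_le (sx_join_le (w_le g) _).
apply: (T_ge0 T_hom); exact: z0.
Qed.

Lemma decr_to_zero_T (G : Type) (leG : G -> G -> Prop) (z : G -> E) :
  decr_to_zero (S := VL_OSig E) leG z ->
  decr_to_zero (S := SX_OSig R X) leG (fun g => T (z g)).
Proof.
move=> zdec; case: (zdec) => dirG z_decr z0 _; split => //=.
- by move=> g g' gg'; apply: (T_le T_hom); exact: z_decr.
- by move=> g; apply: (T_ge0 T_hom); exact: z0.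
by move=> w; exact: le0_of_le_T_decr zdec.
Qed.

Lemma T_order_continuous (A : Type) (leA : A -> A -> Prop) (x : A -> E) :
  ocvg (S := VL_OSig E) leA x 0 ->
  ocvg (S := SX_OSig R X) leA (fun a => T (x a)) (sx_cst X 0).
Proof.
move=> [G [leG [z [zdec z_bound]]]]; exists G, leG, (fun g => T (z g)).
split=> [|g]; first exact: decr_to_zero_T.
have [a0 xz] := z_bound g; exists a0 => a aa.
apply: sx_le_trans (T_le T_hom (xz a aa)); rewrite /= subr0.
apply: (sx_le_trans _ (sx_eq_le (sx_eq_sym (T_abs T_hom (x := x a))))).
by move=> t [dx _] _ /=; rewrite subr0.
Qed.

End Density.

Definition os_meet_preorder (S : OSig) : Prop :=
  [/\ forall a : S, os_le a a,
      forall a b c : S, os_le a b -> os_le b c -> os_le a c,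
      forall a b : S, os_le (os_meet a b) a,
      forall a b : S, os_le (os_meet a b) b &
      forall a b c : S, os_le c a -> os_le c b -> os_le c (os_meet a b)].

Lemma VL_meet_preorder (R : realType) (E : VectorLattice R) :
  os_meet_preorder (VL_OSig E).
Proof.
split; [exact: vl_le_refl | exact: vl_le_trans | exact: vl_inf_lb_l
       | exact: vl_inf_lb_r | exact: vl_inf_greatest].
Qed.

Lemma SX_meet_preorder (R : realType) (X : topologicalType) :
  os_meet_preorder (SX_OSig R X).
Proof.
split; [exact: sx_le_refl | exact: sx_le_trans | exact: sx_meet_le_l
       | exact: sx_meet_le_r | by move=> f g h; exact: sx_le_meet].
Qed.

Section EventualBounds.
Variables (S : OSig) (A : Type) (leA : A -> A -> Prop) (y : A -> S).

Definition eventual_bound (b : S) : Prop :=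
  os_le (os_zero S) b /\
  exists a0, forall a, leA a0 a -> os_le (os_abs (os_sub (y a) (os_zero S))) b.

(* The eventual bounds, ordered downwards, form the dominating net. *)
Lemma ocvg_eventual_bounds (b0 : S) : os_meet_preorder S -> directed leA ->
  eventual_bound b0 ->
  (forall q, (forall b, eventual_bound b -> os_le q b) -> os_le q (os_zero S)) ->
  ocvg leA y (os_zero S).
Proof.
case=> le_refl le_trans meet_l meet_r meet_glb [_ _ leA_trans leA_ub] b0_bd inf0.
exists {b | eventual_bound b}, (fun b b' => os_le (sval b') (sval b)), sval.
split=> [|[b [b_ge0 [a0 a0_bd]]]]; last by exists a0.
split=> //=.
- split=> [|b|b1 b2 b3 b21 b32|]; first by constructor; exists b0.
  + exact: le_refl.
  + exact: le_trans b32 b21.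
  move=> [b1 [b1_0 [a1 a1_bd]]] [b2 [b2_0 [a2 a2_bd]]].
  have [a3 [a13 a23]] := leA_ub a1 a2.
  have b12_bd : eventual_bound (os_meet b1 b2).
    split; first exact: meet_glb.
    exists a3 => a a3a; apply: meet_glb.
      exact: a1_bd (leA_trans _ _ _ a13 a3a).
    exact: a2_bd (leA_trans _ _ _ a23 a3a).
  by exists (exist _ _ b12_bd); split; [exact: meet_l | exact: meet_r].
- by move=> [b []].
by move=> q q_le; apply: inf0 => b b_bd; exact: q_le (exist _ b b_bd).
Qed.

End EventualBounds.

Lemma min_le_scale_min1 (R : realFieldType) (a w c : R) :
  0 <= a -> 0 <= w -> 1 <= c ->
  Num.min a w <= c * Num.min a 1 + Num.max (w - c) 0.
Proof.
move=> a0 w0 c1; case: (lerP a 1) => a1; case: (lerP a w) => aw;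
  case: (lerP (w - c) 0) => wc; nra.
Qed.

Section UoContinuity.
Variables (R : realType) (E : VectorLattice R) (X : topologicalType).
Variable T : E -> SX R X.
Hypothesis T_hom : lattice_hom T.
Hypothesis T_inj : sx_injective T.
Hypothesis X_creg : completely_regular_space X.
Hypothesis T_dense : forall f : SX R X, in_CX f -> in_sup_closure (range T) f.
Variable u : E.
Hypothesis u_ge0 : vl_le 0 u.
Hypothesis Tu : sx_eq (T u) (sx_cst X 1).

Lemma eventual_bound_T_uo (A : Type) (leA : A -> A -> Prop) (x : A -> E) (l : E)
    (W : SX R X) (c : R) (z : E) :
  1 <= c -> sx_le (sx_cst X 0) W -> vl_le 0 z ->
  (exists a0, forall a, leA a0 a ->
     vl_le (vl_abs (vl_inf (vl_abs (x a - l)) u - 0)) z) ->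
  eventual_bound (S := SX_OSig R X) leA
    (fun a => sx_meet (sx_abs (sx_sub (T (x a)) (T l))) W)
    (sx_add (sx_scale c (T z)) (sx_join (sx_sub W (sx_cst X c)) (sx_cst X 0))).
Proof.
move=> c1 W0 z0 [a0 xz]; split.
  move=> t _ [dz [[dW _] _]] /=.
  have := T_ge0 T_hom z0 I dz; have := W0 t I dW => /= W0t z0t.
  by rewrite addr_ge0 ?le_max ?lexx ?orbT // mulr_ge0 //; lra.
exists a0 => a aa.
have Tz := sx_le_trans
  (sx_eq_le (sx_eq_sym (@T_trunc_dist _ _ _ _ T_hom T_inj (x a) l u)))
  (T_le T_hom (xz a aa)).
apply: (sx_le_sdoms (fs := [:: T u])) => t [du _] [[[dx dl] dW] _] [dz _] /=.
have := Tz t (conj (conj (conj dx dl) du) I) dz; rewrite /= (Tu du I) /= !subr0.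
have W0t : 0 <= sfun W t by exact: W0 t I dW.
rewrite (ger0_norm (x := Num.min _ 1)); last by rewrite le_min normr_ge0 ler01.
rewrite (ger0_norm (x := Num.min _ (sfun W t))); last by rewrite le_min normr_ge0.
move=> min_le.
apply: le_trans (min_le_scale_min1 (normr_ge0 _) W0t c1) _.
by rewrite lerD2r ler_wpM2l //; lra.
Qed.

Lemma T_uo_continuous (A : Type) (leA : A -> A -> Prop) (x : A -> E) (l : E) :
  directed leA -> uocvg (S := VL_OSig E) leA x l ->
  uocvg (S := SX_OSig R X) leA (fun a => T (x a)) (T l).
Proof.
move=> dirA xl W W0; have [G [leG [z [zdec z_bd]]]] := xl u u_ge0.
have [_ _ z0 _] := zdec.
apply: (ocvg_eventual_bounds (b0 := W) (SX_meet_preorder R X) dirA).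
  split=> //; case: dirA => -[a0] _ _ _; exists a0 => a _ t [[_ dW] _] _ /=.
  have W0t : 0 <= sfun W t by exact: W0 t I dW.
  by rewrite subr0 ger0_norm ?le_min ?normr_ge0 ?W0t // ge_min lexx orbT.
move=> q q_le; apply: contrapT => /(sx_pos_point [:: W]) [s [[dW _] dq q_pos]].
(* c > W s keeps wq positive at s; c >= 1 is needed by min_le_scale_min1. *)
pose c := Num.max 1 (sfun W s + 1).
have c1 : 1 <= c by rewrite le_max lexx.
have Ws_lt : sfun W s < c.
  by rewrite /c; case: (lerP 1 (sfun W s + 1)) => ?; lra.
pose wq := sx_scale c^-1 (sx_meet q (sx_sub (sx_cst X c) W)).
suff /(_ s (conj dq (conj I dW)) I) : sx_le wq (sx_cst X 0).
  rewrite /= pmulr_rle0 ?invr_gt0 ?ge_min; last lra.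
  by case/orP; lra.
apply: (le0_of_le_T_decr T_hom X_creg T_dense T_inj zdec) => g.
have q_le_g := q_le _ (eventual_bound_T_uo c1 W0 (z0 g) (z_bd g)).
move=> t [dq' [_ dW']] dz /=.
have := q_le_g t dq' (conj dz (conj (conj dW' I) I)) => /=.
have := T_ge0 T_hom (z0 g) I dz => /= z0t.
rewrite ler_pdivrMl; last lra.
by case: (lerP (sfun q t) (c - sfun W t)); case: (lerP (sfun W t - c) 0); nra.
Qed.

End UoContinuity.

Section UoReflection.
Variables (R : realType) (E : VectorLattice R) (X : topologicalType).
Variable T : E -> SX R X.
Hypothesis T_hom : lattice_hom T.
Hypothesis T_inj : sx_injective T.
Hypothesis X_creg : completely_regular_space X.
Hypothesis T_dense : forall f : SX R X, in_CX f -> in_sup_closure (range T) f.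
Hypothesis E_arch : archimedean_vl E.
Variables (A : Type) (leA : A -> A -> Prop) (x : A -> E) (l e : E).
Hypothesis dirA : directed leA.

Let y a := vl_inf (vl_abs (x a - l)) e.
Let bound := eventual_bound (S := VL_OSig E) leA y.

Lemma eventual_bound_subr (d : SX R X) (v w b : E) :
  sx_le (sx_cst X 0) d ->
  (exists a0, forall a, leA a0 a -> sx_le (T (vl_abs (y a - 0))) d) ->
  sx_le (T v) (sx_join (sx_sub (T w) d) (sx_cst X 0)) -> vl_le w b ->
  bound b -> bound (b - v).
Proof.
case: dirA => _ _ leA_trans leA_ub d0 [a1 yd] Tv_le wb [b0 [a2 yb]].
have Tv_b : sx_le (T v) (T b).
  apply: sx_le_trans Tv_le (sx_join_le _ (T_ge0 T_hom b0)).
  apply: sx_le_trans (T_le T_hom wb) => t [dw dd] _ /=.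
  by have := d0 t I dd; rewrite /= gerDl oppr_le0.
split; first exact/vl_subr_ge0/(le_of_T_le T_hom T_inj).
have [a3 [a13 a23]] := leA_ub a1 a2; exists a3 => a a3a.
apply: (le_of_T_le T_hom T_inj).
apply: (sx_le_trans _ (sx_eq_le (sx_eq_sym (T_sub T_hom (x := b) (y := v))))).
apply: (sx_le_sdoms (fs := [:: d; T w])) => t [dd [dw _]] dy [db dv] /=.
have := yd a (leA_trans _ _ _ a13 a3a) t dy dd.
have := T_le T_hom (yb a (leA_trans _ _ _ a23 a3a)) dy db.
have := Tv_le t dv (conj (conj dw dd) I); have := T_le T_hom wb dw db => /=.
by case: (lerP (sfun (T w) t - sfun d t) 0); lra.
Qed.

Lemma T_uo_reflect :
  uocvg (S := SX_OSig R X) leA (fun a => T (x a)) (T l) ->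
  vl_le 0 e -> ocvg (S := VL_OSig E) leA y 0.
Proof.
move=> Tx_uo e0.
have [H [leH [d [[_ _ d0 d_inf] d_bd]]]] := Tx_uo (T e) (T_ge0 T_hom e0).
have Ty_eq a := @T_trunc_dist _ _ _ _ T_hom T_inj (x a) l e.
have e_bd : bound e.
  split=> //; case: dirA => -[a0] _ _ _; exists a0 => a _.
  apply: (le_of_T_le T_hom T_inj); apply: sx_le_trans (sx_eq_le (Ty_eq a)) _.
  move=> t [[[dx dl] de] _] _ /=.
  have /= e0t := T_ge0 T_hom e0 I de.
  by rewrite subr0 ger0_norm ?le_min ?normr_ge0 ?e0t // ge_min lexx orbT.
apply: (@ocvg_eventual_bounds (VL_OSig E) A leA y e
         (VL_meet_preorder E) dirA e_bd).
move=> q q_le; set qp := vl_sup q 0.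
apply: (vl_le_trans (vl_sup_ub_l q 0)); apply: (le_of_T_le T_hom T_inj).
apply: (sx_le_trans _ (sx_eq_le (sx_eq_sym (T0 T_hom)))).
apply: d_inf => h; apply: contrapT => Tqp_nle.
have [|t [_ dt pos]] := sx_pos_point [::] (f := sx_sub (T qp) (d h)).
  move=> sub_le; apply: Tqp_nle => s dq dd.
  by have := sub_le s (conj dq dd) I; rewrite /= subr_le0.
have [v [v0 v_neq0 Tv_le]] := exists_T_le_pos_part T_hom X_creg T_dense dt pos.
have y_bd : exists a0, forall a, leA a0 a -> sx_le (T (vl_abs (y a - 0))) (d h).
  have [a0 bd] := d_bd h.
  by exists a0 => a aa; exact: sx_le_trans (sx_eq_le (Ty_eq a)) (bd a aa).
have bd_n n : bound (e - n%:R *: v).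
  elim: n => [|n IH]; first by rewrite scale0r subr0.
  rewrite -natr1 scalerDl scale1r opprD addrA.
  apply: (eventual_bound_subr (d0 h) y_bd Tv_le _ IH).
  by apply: vl_sup_least; [exact: q_le | case: IH].
apply/v_neq0/(E_arch v0) => n; exact: vl_le_subr_swap (q_le _ (bd_n n)).
Qed.

End UoReflection.

Lemma in_sup_closureS (R : realType) (X : topologicalType) (A B : set (SX R X))
    (f : SX R X) :
  A `<=` B -> in_sup_closure A f -> in_sup_closure B f.
Proof.
move=> AB fA eps eps0; have [g [Ag fg]] := fA eps eps0.
by exists g; split; [exact: AB|].
Qed.

Unset Implicit Arguments.

Theorem lemma3p2 (R : realType) (E : VectorLattice R) (u : E)
  (X : topologicalType) (T : E -> SX R X) :
  archimedean_vl E -> weak_unit u ->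
  compact [set: X] -> hausdorff_space X ->
  lattice_hom T -> sx_injective T ->
  sx_eq (T u) (sx_cst X 1) ->
  (forall f : SX R X, in_sup_closure (T @` ideal_gen u) f <-> in_CX f) ->
  [/\ (* T is order continuous *)
      (forall (A : Type) (leA : A -> A -> Prop) (x : A -> E),
         directed leA -> ocvg (S := VL_OSig E) leA x 0 ->
         ocvg (S := SX_OSig R X) leA (fun a => T (x a)) (sx_cst X 0)),
      (* T is uo-continuous *)
      (forall (A : Type) (leA : A -> A -> Prop) (x : A -> E) (l : E),
         directed leA -> uocvg (S := VL_OSig E) leA x l ->
         uocvg (S := SX_OSig R X) leA (fun a => T (x a)) (T l)) &
      (* T^-1 : T(E) -> E is uo-continuous *)
      (forall (A : Type) (leA : A -> A -> Prop) (x : A -> E) (l : E),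
         directed leA -> uocvg (S := SX_OSig R X) leA (fun a => T (x a)) (T l) ->
         uocvg (S := VL_OSig E) leA x l)].
Proof.
move=> E_arch [u_ge0 _] X_compact X_hausdorff T_hom T_inj Tu T_closure.
have X_creg : completely_regular_space X := @normal_completely_regular R X
  (compact_normal X_hausdorff X_compact) (hausdorff_accessible X_hausdorff).
have T_dense f : in_CX f -> in_sup_closure (range T) f.
  by move/T_closure; apply: in_sup_closureS; exact: image_subset.
split=> A leA x.
- by move=> _ /(T_order_continuous T_hom X_creg T_dense T_inj).
- by move=> l dirA /(T_uo_continuous T_hom T_inj X_creg T_dense u_ge0 Tu dirA).
- move=> l dirA Tx_uo e.
  by apply: (T_uo_reflect T_hom T_inj X_creg T_dense E_arch dirA Tx_uo).
Qed.
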